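(* There are no $1$-oriented and no $2$-oriented Spherical Diagrams.
   Context: A geodesic arc on the unit sphere in $\mathbb R^3$ is the unique shortest curve joining two non-antipodal points. An arc $a$ blocks an arc $b$ (equivalently, $b$ hits $a$) if an endpoint of $b$ lies in the relative interior of $a$. A Spherical Diagram (SD) is a finite non-empty collection $\mathcal D$ of pairwise interior-disjoint geodesic arcs on the unit sphere such that each arc of $\mathcal D$ is blocked by arcs of $\mathcal D$ at each of its endpoints. An SD $\mathcal D$ is $k$-oriented if there exist a set $P$ of $k$ points on the unit sphere (poles), no two antipodal, and a function $f\colon\mathcal D\to P$ such that each arc $a\in\mathcal D$ lies on a great circle through $f(a)$ but contains neither $f(a)$ nor its antipode $-f(a)$. *)

From HB Require Import structures.
From mathcomp Require Import all_boot all_order all_algebra.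
From mathcomp Require Import reals.
Set Implicit Arguments. Unset Strict Implicit. Unset Printing Implicit Defensive.
Import Order.TTheory GRing.Theory Num.Theory.
Local Open Scope ring_scope.

Section Spherical.
Variable R : realType.
Notation vec := 'rV[R]_3.

Definition dot (u v : vec) : R := \sum_(i < 3) u 0 i * v 0 i.

Definition on_sphere (x : vec) : Prop := dot x x = 1.

(* an arc is represented by its ordered pair of endpoints *)
Definition sarc := (vec * vec)%type.

Definition geodesic_arc (a : sarc) : Prop :=
  on_sphere a.1 /\ on_sphere a.2 /\ a.1 <> a.2 /\ a.1 <> - a.2.

(* points of the (closed) shortest arc from a.1 to a.2: unit vectors that are
   nonnegative combinations of the endpoints *)
Definition arc_pts (a : sarc) (x : vec) : Prop :=
  on_sphere x /\ exists s t : R, 0 <= s /\ 0 <= t /\ x = s *: a.1 + t *: a.2.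

Definition arc_relint (a : sarc) (x : vec) : Prop :=
  on_sphere x /\ exists s t : R, 0 < s /\ 0 < t /\ x = s *: a.1 + t *: a.2.

Definition blocks (a b : sarc) : Prop := arc_relint a b.1 \/ arc_relint a b.2.

Definition spherical_diagram (D : seq sarc) : Prop :=
  D <> [::] /\
  (forall a, a \in D -> geodesic_arc a) /\
  (forall a b, a \in D -> b \in D -> a <> b ->
     forall x, ~ (arc_relint a x /\ arc_relint b x)) /\
  (forall b, b \in D ->
     (exists2 a, a \in D & arc_relint a b.1) /\
     (exists2 a, a \in D & arc_relint a b.2)).

(* great circle = sphere intersected with a plane through the origin with
   normal n <> 0; the arc a lies on a great circle through p *)
Definition on_great_circle_through (a : sarc) (p : vec) : Prop :=
  exists n : vec, n <> 0 /\ dot n p = 0 /\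
    (forall x, arc_pts a x -> dot n x = 0).

Definition k_oriented (k : nat) (D : seq sarc) : Prop :=
  exists P : seq vec,
    size P = k /\ uniq P /\
    (forall p, p \in P -> on_sphere p) /\
    (forall p q, p \in P -> q \in P -> p <> - q) /\
    exists f : sarc -> vec,
      forall a, a \in D ->
        f a \in P /\ on_great_circle_through a (f a) /\
        ~ arc_pts a (f a) /\ ~ arc_pts a (- f a).

End Spherical.

From HB Require Import structures.
From mathcomp Require Import all_boot all_order all_algebra reals.
From mathcomp Require Import ring lra.
Set Implicit Arguments. Unset Strict Implicit. Unset Printing Implicit Defensive.
Import Order.TTheory GRing.Theory Num.Theory.
Local Open Scope ring_scope.

(* Let n be normal to a great circle through all the poles (there are at most
   two), and u a vector with u.r <> 0 for every pole r. In the gnomonic chart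
   x |-> x / n.x of the open hemisphere n.x > 0, great circles through a pole r
   become lines of direction r, so the slope u.x / n.x is strictly monotone
   along every arc there. An arc with an endpoint in this hemisphere lies in it,
   so the endpoint of largest slope would be blocked by an arc having an
   endpoint of larger slope: no endpoint lies in either open hemisphere. Then
   all arcs lie on the great circle orthogonal to n, where an arc blocking
   another one overlaps it. *)

Lemma mediant_eq (R : realFieldType) (s t A1 A2 N1 N2 : R) :
  0 < s -> 0 < t -> 0 < N1 -> 0 < N2 ->
  A1 / N1 <= (s * A1 + t * A2) / (s * N1 + t * N2) ->
  A2 / N2 <= (s * A1 + t * A2) / (s * N1 + t * N2) -> A1 * N2 = A2 * N1.
Proof.
move=> s_gt0 t_gt0 N1_gt0 N2_gt0; have N_gt0 : 0 < s * N1 + t * N2 by nra.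
rewrite ler_pdivrMr // mulrAC ler_pdivlMr // => le1.
rewrite ler_pdivrMr // mulrAC ler_pdivlMr // => le2.
by apply/eqP; rewrite eq_le; apply/andP; split; nra.
Qed.

Lemma exists_large_scale (R : realFieldType) (s t al be : R) : 0 < s -> 0 < t ->
  exists2 K, 0 < K & 0 < K * s + al /\ 0 < K * t + be.
Proof.
move=> s_gt0 t_gt0; set x := (`|al| + 1) / s; set y := (`|be| + 1) / t.
have xs : x * s = `|al| + 1 by rewrite divfK ?gt_eqF.
have yt : y * t = `|be| + 1 by rewrite divfK ?gt_eqF.
have x_gt0 : 0 < x by rewrite divr_gt0 // ltr_pwDr.
have y_gt0 : 0 < y by rewrite divr_gt0 // ltr_pwDr.
have := ler_norm (- al); have := ler_norm (- be); rewrite !normrN => hbe hal.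
by exists (x + y); [lra | split; nra].
Qed.

Lemma seq_argmax (T : eqType) (R : realDomainType) (F : T -> R) (s : seq T) x :
  x \in s -> exists2 e, e \in s & forall y, y \in s -> F y <= F e.
Proof.
elim: s x => [//|z s IH] x _.
case: s IH => [_|w s IH].
  by exists z; rewrite ?mem_head // => y; rewrite inE => /eqP ->.
have [e es he] := IH w (mem_head _ _).
have [ze|ez] := lerP (F z) (F e).
  exists e; first by rewrite inE es orbT.
  by move=> y /predU1P [->|/he].
exists z; rewrite ?mem_head // => y /predU1P [->//|/he Fye].
exact: le_trans Fye (ltW ez).
Qed.

Section Vectors.
Variable R : realType.
Notation vec := 'rV[R]_3.
Implicit Types (u v w m n p q : vec) (s t : R).

Definition i0 : 'I_3 := @Ordinal 3 0 isT.
Definition i1 : 'I_3 := @Ordinal 3 1 isT.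
Definition i2 : 'I_3 := @Ordinal 3 2 isT.

Lemma dotE u v : dot u v = u 0 i0 * v 0 i0 + u 0 i1 * v 0 i1 + u 0 i2 * v 0 i2.
Proof.
rewrite /dot !big_ord_recr big_ord0 /= add0r.
by congr (_ * _ + _ * _ + _ * _); congr (_ 0 _); apply: val_inj.
Qed.

Lemma row3_eq u v :
  u 0 i0 = v 0 i0 -> u 0 i1 = v 0 i1 -> u 0 i2 = v 0 i2 -> u = v.
Proof.
move=> e0 e1 e2; apply/rowP => -[[|[|[|//]]] j3].
- by rewrite (_ : Ordinal _ = i0) //; apply: val_inj.
- by rewrite (_ : Ordinal _ = i1) //; apply: val_inj.
- by rewrite (_ : Ordinal _ = i2) //; apply: val_inj.
Qed.

Definition cross u v : vec :=
  \row_(j < 3) [:: u 0 i1 * v 0 i2 - u 0 i2 * v 0 i1;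
                  u 0 i2 * v 0 i0 - u 0 i0 * v 0 i2;
                  u 0 i0 * v 0 i1 - u 0 i1 * v 0 i0]`_j.

Ltac by_coords := rewrite ?dotE; try apply: row3_eq; rewrite /cross ?dotE ?mxE /=; ring.

Lemma dotC u v : dot u v = dot v u. Proof. by_coords. Qed.
Lemma dotDr u v w : dot u (v + w) = dot u v + dot u w. Proof. by_coords. Qed.
Lemma dotZr u v s : dot u (s *: v) = s * dot u v. Proof. by_coords. Qed.
Lemma dotNr u v : dot u (- v) = - dot u v. Proof. by_coords. Qed.
Lemma dotNl u v : dot (- u) v = - dot u v. Proof. by_coords. Qed.

Lemma dot_crossl u v : dot (cross u v) u = 0. Proof. by_coords. Qed.
Lemma dot_crossr u v : dot (cross u v) v = 0. Proof. by_coords. Qed.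

Lemma cross_combl u v s t : cross (s *: u + t *: v) v = s *: cross u v.
Proof. by_coords. Qed.
Lemma cross_combr u v s t : cross u (s *: u + t *: v) = t *: cross u v.
Proof. by_coords. Qed.

Lemma cross0l v : cross 0 v = 0. Proof. by_coords. Qed.
Lemma cross0r u : cross u 0 = 0. Proof. by_coords. Qed.

Lemma dot_sum_diff u v : dot (u - v) (u - v) * dot (u + v) (u + v) =
  (dot u u - dot v v) ^+ 2 + 4 * dot (cross u v) (cross u v).
Proof. by_coords. Qed.

Lemma triple_scale w u v m : dot w (cross u v) *: m =
  dot m w *: cross u v + dot m u *: cross v w + dot m v *: cross w u.
Proof. by_coords. Qed.

Lemma cross_basis w u v : dot (cross u v) (cross u v) *: w =
  dot w (cross v (cross u v)) *: u + dot w (cross (cross u v) u) *: v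
  + dot w (cross u v) *: cross u v.
Proof. by_coords. Qed.

Lemma dot_self_eq0 v : dot v v = 0 -> v = 0.
Proof. rewrite dotE => v0; apply: row3_eq; rewrite mxE; nra. Qed.

Lemma dot_self_gt0 v : v != 0 -> 0 < dot v v.
Proof.
by move=> v0; rewrite lt_def (contra_neq (@dot_self_eq0 v) v0) /= dotE; nra.
Qed.

Lemma comb_eq0 u v s t : cross u v != 0 -> s *: u + t *: v = 0 -> s = 0 /\ t = 0.
Proof.
move=> c0 e; have := cross_combl u v s t; have := cross_combr u v s t.
rewrite e cross0l cross0r => /esym/eqP + /esym/eqP.
by rewrite !scaler_eq0 (negbTE c0) !orbF => /eqP t0 /eqP s0.
Qed.

Lemma cross_neq0 u v : on_sphere u -> on_sphere v -> u <> v -> u <> - v ->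
  cross u v != 0.
Proof.
rewrite /on_sphere => uu vv neq_uv neq_uNv; apply/eqP => uv0.
have : dot (u - v) (u - v) * dot (u + v) (u + v) = 0.
  by rewrite dot_sum_diff uv0 uu vv dotE !mxE; ring.
move/eqP; rewrite mulf_eq0 => /orP [] /eqP /dot_self_eq0 /eqP.
- by rewrite subr_eq0 => /eqP.
- by rewrite addr_eq0 => /eqP.
Qed.

Lemma plane_span m u v w : m != 0 -> cross u v != 0 ->
  dot m u = 0 -> dot m v = 0 -> dot m w = 0 -> exists s t, w = s *: u + t *: v.
Proof.
move=> m0 c0 mu mv mw; set c := cross u v in c0 *.
have wc : dot w c = 0.
  apply/eqP; have := triple_scale w u v m.
  rewrite mu mv mw !scale0r !addr0 => /eqP.
  by rewrite scaler_eq0 (negbTE m0) orbF.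
have cc : dot c c != 0 by rewrite gt_eqF ?dot_self_gt0.
exists (dot w (cross v c) / dot c c), (dot w (cross c u) / dot c c).
apply: (scalerI cc); rewrite cross_basis -/c wc scale0r addr0.
by rewrite scalerDr !scalerA !(mulrC (dot c c)) !divfK.
Qed.

Lemma exists_perp p : on_sphere p -> exists2 n, n != 0 & dot n p = 0.
Proof.
move=> pp; pose e0 : vec := delta_mx 0 i0; pose e1 : vec := delta_mx 0 i1.
have [c0|] := eqVneq (cross p e0) 0; last by exists (cross p e0); rewrite ?dot_crossl.
have [c1|] := eqVneq (cross p e1) 0; last by exists (cross p e1); rewrite ?dot_crossl.
move: pp (congr1 (fun w : vec => w 0 i1) c0) (congr1 (fun w : vec => w 0 i2) c0).
move: (congr1 (fun w : vec => w 0 i2) c1); rewrite /on_sphere dotE /cross !mxE /=.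
nra.
Qed.

Lemma dot_sum_sphere p q : on_sphere p -> on_sphere q -> p <> - q ->
  dot (p + q) p != 0.
Proof.
rewrite /on_sphere => pp qq neq_pNq; apply/eqP => s0; apply: neq_pNq.
apply/eqP; rewrite -addr_eq0; apply/eqP/dot_self_eq0.
have -> : dot (p + q) (p + q) = 2 * dot (p + q) p - (dot p p - dot q q).
  by by_coords.
by rewrite s0 pp qq; ring.
Qed.

End Vectors.

Section Arcs.
Variable R : realType.
Notation vec := 'rV[R]_3.
Implicit Types (a b : sarc R) (u v m n r : vec) (s t : R).

Definition oriented_by a r : Prop :=
  on_great_circle_through a r /\ ~ arc_pts a r /\ ~ arc_pts a (- r).

Definition normalize v : vec := (Num.sqrt (dot v v))^-1 *: v.

Lemma on_sphere_normalize v : v != 0 -> on_sphere (normalize v).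
Proof.
move=> v0; have vv := dot_self_gt0 v0.
rewrite /on_sphere /normalize dotZr dotC dotZr.
rewrite -[X in _ * (_ * X)](sqr_sqrtr (ltW vv)).
by field; rewrite gt_eqF // sqrtr_gt0.
Qed.

Lemma arc_relint_normalize a s t : 0 < s -> 0 < t -> s *: a.1 + t *: a.2 != 0 ->
  arc_relint a (normalize (s *: a.1 + t *: a.2)).
Proof.
move=> s_gt0 t_gt0 v0; split; first exact: on_sphere_normalize.
set k := (Num.sqrt (dot (s *: a.1 + t *: a.2) (s *: a.1 + t *: a.2)))^-1.
have k_gt0 : 0 < k by rewrite invr_gt0 sqrtr_gt0 dot_self_gt0.
exists (k * s), (k * t); split; first exact: mulr_gt0.
by split; [exact: mulr_gt0 | rewrite /normalize -/k scalerDr !scalerA].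
Qed.

Lemma geodesic_cross_neq0 a : geodesic_arc a -> cross a.1 a.2 != 0.
Proof. by move=> [a1 [a2 [neq neqN]]]; exact: cross_neq0. Qed.

Lemma arc_relint_endpoint a : geodesic_arc a -> ~ arc_relint a a.1.
Proof.
move=> /geodesic_cross_neq0 c0 [_ [s [t [_ [t_gt0 e]]]]].
have : (s - 1) *: a.1 + t *: a.2 = 0 by rewrite scalerBl scale1r addrAC -e subrr.
by move=> /(comb_eq0 c0) [_ t0]; move: t_gt0; rewrite t0 ltxx.
Qed.

Lemma coplanar_relint_meet a b n : cross a.1 a.2 != 0 -> n != 0 ->
  dot n a.1 = 0 -> dot n a.2 = 0 -> dot n b.2 = 0 -> arc_relint a b.1 ->
  exists x, arc_relint a x /\ arc_relint b x.
Proof.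
move=> c0 n0 na1 na2 nb2 [_ [s [t [s_gt0 [t_gt0 b1E]]]]].
have [al [be b2E]] := plane_span n0 c0 na1 na2 nb2.
have [K K_gt0 [Ks Kt]] := exists_large_scale al be s_gt0 t_gt0.
have vE : K *: b.1 + 1 *: b.2 = (K * s + al) *: a.1 + (K * t + be) *: a.2.
  by rewrite b1E b2E scale1r scalerDr !scalerA addrACA -!scalerDl.
(* K b.1 + b.2 is a positive combination of the endpoints of a and of b. *)
have v0 : K *: b.1 + 1 *: b.2 != 0.
  by apply/eqP; rewrite vE => /(comb_eq0 c0) [Ks0 _]; lra.
exists (normalize (K *: b.1 + 1 *: b.2)); split; last exact: arc_relint_normalize.
by rewrite vE; apply: arc_relint_normalize; rewrite -?vE.
Qed.

Lemma oriented_comb a r : geodesic_arc a -> on_sphere r -> oriented_by a r ->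
  exists s t, s * t < 0 /\ r = s *: a.1 + t *: a.2.
Proof.
move=> ha rr [[m [m0 [mr m_arc]]] [not_r not_Nr]].
have [a1 [a2 _]] := ha.
have ma1 : dot m a.1 = 0.
  by apply: m_arc; split=> //; exists 1, 0; rewrite scale1r scale0r addr0 ler01 lexx.
have ma2 : dot m a.2 = 0.
  by apply: m_arc; split=> //; exists 0, 1; rewrite scale1r scale0r add0r ler01 lexx.
have m0' : m != 0 by apply/eqP.
have [s [t rE]] := plane_span m0' (geodesic_cross_neq0 ha) ma1 ma2 mr.
exists s, t; split=> //; rewrite ltNge; apply/negP => st_ge0.
have [[s_ge0 t_ge0]|[s_le0 t_le0]] : (0 <= s /\ 0 <= t) \/ (s <= 0 /\ t <= 0).
  have [s_lt0|s_ge0] := ltrP s 0; first by right; split=> //; nra.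
  by have [t_lt0|t_ge0] := ltrP t 0; [right | left]; split=> //; nra.
- by apply: not_r; split; last by exists s, t.
- apply: not_Nr; split; first by rewrite /on_sphere dotNl dotNr opprK.
  by exists (- s), (- t); rewrite rE opprD !scaleNr !oppr_ge0 s_le0 t_le0.
Qed.

Lemma comb_sign a r m s t : s * t < 0 -> r = s *: a.1 + t *: a.2 ->
  dot m r = 0 -> (0 < dot m a.1) = (0 < dot m a.2).
Proof.
move=> st -> ; rewrite dotDr !dotZr; set N1 := dot m a.1; set N2 := dot m a.2 => e.
have e1 : s * t * N1 + t ^+ 2 * N2 = 0 by rewrite -(mulr0 t) -e; ring.
have e2 : s * t * N2 + s ^+ 2 * N1 = 0 by rewrite -(mulr0 s) -e; ring.
by apply/idP/idP => ?; nra.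
Qed.

Lemma comb_ratio_neq a r m u s t : r = s *: a.1 + t *: a.2 ->
  dot m r = 0 -> dot u r != 0 -> 0 < dot m a.1 ->
  dot u a.1 * dot m a.2 != dot u a.2 * dot m a.1.
Proof.
move=> -> ; rewrite !dotDr !dotZr => mr /eqP ur ma1; apply/eqP => e; apply: ur.
have N1_neq0 : dot m a.1 != 0 by rewrite gt_eqF.
apply: (mulfI N1_neq0); rewrite mulr0.
transitivity (dot u a.1 * (s * dot m a.1 + t * dot m a.2)
              + t * (dot u a.2 * dot m a.1 - dot u a.1 * dot m a.2)); first by ring.
by rewrite mr e subrr; ring.
Qed.

End Arcs.

Section Diagram.
Variables (R : realType) (D : seq (sarc R)).
Hypothesis diagD : spherical_diagram D.
Notation vec := 'rV[R]_3.

Lemma diagram_not_coplanar (n : vec) : n != 0 ->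
  ~ (forall b, b \in D -> dot n b.1 = 0 /\ dot n b.2 = 0).
Proof.
move=> n0 coplanar; have [D0 [geo [disj block]]] := diagD.
have [b bD] : exists b, b \in D by move: D0; case: D => // b s _; exists b; exact: mem_head.
have [[a aD ab1] _] := block b bD.
have [na1 na2] := coplanar a aD; have [_ nb2] := coplanar b bD.
have neq_ab : a <> b by move=> eab; apply: (arc_relint_endpoint (geo b bD)); rewrite -{1}eab.
have [x [xa xb]] := coplanar_relint_meet (geodesic_cross_neq0 (geo a aD)) n0 na1 na2 nb2 ab1.
exact: disj aD bD neq_ab x (conj xa xb).
Qed.

Lemma endpoints_nonpos (n u : vec) :
  (forall a, a \in D -> (0 < dot n a.1) = (0 < dot n a.2)) ->
  (forall a, a \in D -> 0 < dot n a.1 ->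
     dot u a.1 * dot n a.2 != dot u a.2 * dot n a.1) ->
  forall b, b \in D -> dot n b.1 <= 0 /\ dot n b.2 <= 0.
Proof.
move=> sign ratio; have [_ [_ [_ block]]] := diagD.
set ends := [seq a.1 | a <- D] ++ [seq a.2 | a <- D].
suff ends_nonpos e0 : e0 \in ends -> dot n e0 <= 0.
  by move=> b bD; split; apply: ends_nonpos; rewrite mem_cat map_f ?orbT.
move=> e0_end; rewrite leNgt; apply/negP => e0_pos.
set E := [seq e <- ends | 0 < dot n e].
have e0E : e0 \in E by rewrite mem_filter e0_pos.
have [e] := seq_argmax (fun e => dot u e / dot n e) e0E.
rewrite mem_filter => /andP [e_pos e_end] e_max.
have [a aD [_ [s [t [s_gt0 [t_gt0 eE]]]]]] : exists2 a, a \in D & arc_relint a e.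
  move: e_end; rewrite mem_cat => /orP [] /mapP [c cD ->].
  - by have [[a ? ?] _] := block c cD; exists a.
  - by have [_ [a ? ?]] := block c cD; exists a.
have [a1_pos a2_pos] : 0 < dot n a.1 /\ 0 < dot n a.2.
  move: e_pos (sign a aD); rewrite eE dotDr !dotZr.
  have [a1_pos|a1_le0] := ltrP 0 (dot n a.1) => [_ <- //|e_pos].
  by move/esym/negbT; rewrite -leNgt => a2_le0; nra.
(* The slope of e is a mediant of those of a.1 and a.2, which do not exceed it. *)
have Fe : dot u e / dot n e =
    (s * dot u a.1 + t * dot u a.2) / (s * dot n a.1 + t * dot n a.2).
  by rewrite eE !dotDr !dotZr.
apply/negP: (ratio a aD a1_pos); apply/negPn/eqP.
apply: (mediant_eq s_gt0 t_gt0 a1_pos a2_pos); rewrite -Fe; apply: e_max.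
- by rewrite mem_filter a1_pos mem_cat map_f.
- by rewrite mem_filter a2_pos mem_cat (map_f (fun a => a.2)) ?orbT.
Qed.

Lemma coplanar_poles_not_oriented (P : seq vec) (n u : vec) (f : sarc R -> vec) :
  n != 0 -> (forall r, r \in P -> [/\ on_sphere r, dot n r = 0 & dot u r != 0]) ->
  ~ (forall a, a \in D -> f a \in P /\ oriented_by a (f a)).
Proof.
move=> n0 poles oriented; have [_ [geo _]] := diagD.
have comb a : a \in D -> exists s t, s * t < 0 /\ f a = s *: a.1 + t *: a.2.
  move=> aD; have [fP ora] := oriented a aD; have [fS _ _] := poles _ fP.
  exact: oriented_comb (geo a aD) fS ora.
have nonpos m : (forall r, r \in P -> dot m r = 0) ->
    forall b, b \in D -> dot m b.1 <= 0 /\ dot m b.2 <= 0.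
  move=> mP; apply: (endpoints_nonpos (u := u)) => a aD;
    have [s [t [st fE]]] := comb a aD; have [fP _] := oriented a aD.
  - exact: comb_sign st fE (mP _ fP).
  - by have [_ _ uf] := poles _ fP; exact: comb_ratio_neq fE (mP _ fP) uf.
have [nP NnP] : (forall r, r \in P -> dot n r = 0) /\
                (forall r, r \in P -> dot (- n) r = 0).
  by split=> r /poles [_ nr _]; rewrite ?dotNl nr ?oppr0.
apply: (diagram_not_coplanar n0) => b bD.
have [nb1 nb2] := nonpos n nP b bD; have [Nnb1 Nnb2] := nonpos (- n) NnP b bD.
by move: Nnb1 Nnb2; rewrite !dotNl !oppr_le0 => Nnb1 Nnb2; split; apply: le_anti; apply/andP.
Qed.

End Diagram.

Lemma not_one_oriented (R : realType) (D : seq (sarc R)) :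
  spherical_diagram D -> ~ k_oriented 1 D.
Proof.
move=> diagD [P [sizeP [_ [sphere [_ [f oriented]]]]]].
case: P sizeP sphere oriented => [|p []] // _ sphere oriented.
have pp := sphere p (mem_head _ _); have [n n0 np] := exists_perp pp.
apply: (coplanar_poles_not_oriented diagD (u := p) n0 _ oriented) => r.
by rewrite inE => /eqP ->; split; rewrite // pp oner_neq0.
Qed.

Lemma not_two_oriented (R : realType) (D : seq (sarc R)) :
  spherical_diagram D -> ~ k_oriented 2 D.
Proof.
move=> diagD [P [sizeP [uniqP [sphere [antipodal [f oriented]]]]]].
case: P sizeP uniqP sphere antipodal oriented => [|p [|q []]] //.
move=> _ uniqP sphere antipodal oriented.
have pP : p \in [:: p; q] := mem_head _ _.
have qP : q \in [:: p; q] by rewrite !inE eqxx orbT.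
have neq_pq : p <> q by apply/eqP; move: uniqP; rewrite /= inE andbT.
have pp := sphere p pP; have qq := sphere q qP.
have pNq := antipodal p q pP qP; have qNp := antipodal q p qP pP.
have n0 := cross_neq0 pp qq neq_pq pNq.
apply: (coplanar_poles_not_oriented diagD (u := p + q) n0 _ oriented) => r.
rewrite !inE => /orP [] /eqP ->.
- by split; rewrite ?dot_crossl ?dot_sum_sphere.
- by split; rewrite ?dot_crossr // addrC dot_sum_sphere.
Qed.

Theorem mainTheorem8 (R : realType) (D : seq (sarc R)) :
  spherical_diagram D -> ~ k_oriented 1 D /\ ~ k_oriented 2 D.
Proof. by move=> diagD; split; [exact: not_one_oriented | exact: not_two_oriented]. Qed.
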